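(* In the 2SDI setting where Alice measures the qubit observables $A_0=\sigma_x$, $A_1=\sigma_y$ and Bob and Charlie are black boxes, the Svetlichny family $P^V_{SvF}$ demonstrates tripartite steering (i.e. admits no 2SDI fully LHS-LHV model) whenever $V>\frac12$.
   Context: Outcomes and settings: $a,b,c,x,y,z\in\{0,1\}$. For a qubit observable $O$ with eigenvalues $\pm1$, the measurement has projectors $M_0=(\mathbb 1+O)/2$, $M_1=(\mathbb 1-O)/2$; $M^A_{a|x}$ denotes the projectors of $A_x$. Svetlichny family ($0<V\le1$): $P^V_{SvF}(abc|xyz)=\frac{2+(-1)^{a\oplus b\oplus c\oplus xy\oplus yz\oplus xz}\sqrt2\,V}{16}$. 2SDI fully LHS-LHV model: there exist probabilities $q_\lambda$, qubit states $\rho^\lambda_A$ and arbitrary conditional distributions $P_\lambda(b|y)$, $P_\lambda(c|z)$ with $P(abc|xyz)=\sum_\lambda q_\lambda \mathrm{Tr}(M^A_{a|x}\rho^\lambda_A)P_\lambda(b|y)P_\lambda(c|z)$ for all $a,b,c,x,y,z$. A correlation demonstrates tripartite steering in the 2SDI scenario iff it admits no such model. *)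

From Stdlib Require Import Reals Lra.
Open Scope R_scope.

Record Cx := mkC { re : R ; im : R }.
Definition C0 : Cx := mkC 0 0.
Definition C1 : Cx := mkC 1 0.
Definition Cadd (u v : Cx) : Cx := mkC (re u + re v) (im u + im v).
Definition Cmul (u v : Cx) : Cx :=
  mkC (re u * re v - im u * im v) (re u * im v + im u * re v).
Definition Cconj (u : Cx) : Cx := mkC (re u) (- im u).
Definition Cscale (r : R) (u : Cx) : Cx := mkC (r * re u) (r * im u).

(* qubit operators: 2x2 complex matrices indexed by bool (false = |0>, true = |1>) *)
Definition Mat2 := bool -> bool -> Cx.
Definition Mid : Mat2 := fun i j => if Bool.eqb i j then C1 else C0.
Definition Madd (A B : Mat2) : Mat2 := fun i j => Cadd (A i j) (B i j).
Definition Mscale (r : R) (A : Mat2) : Mat2 := fun i j => Cscale r (A i j).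
Definition Mmul (A B : Mat2) : Mat2 :=
  fun i j => Cadd (Cmul (A i false) (B false j)) (Cmul (A i true) (B true j)).
Definition Mtr (A : Mat2) : Cx := Cadd (A false false) (A true true).

Definition sigma_x : Mat2 := fun i j => if xorb i j then C1 else C0.
Definition sigma_y : Mat2 := fun i j =>
  match i, j with
  | false, true => mkC 0 (-1)
  | true, false => mkC 0 1
  | _, _ => C0
  end.

Definition hermitian (A : Mat2) : Prop := forall i j, A i j = Cconj (A j i).
Definition psd (A : Mat2) : Prop :=
  forall v : bool -> Cx,
    0 <= re (Cadd
          (Cadd (Cmul (Cconj (v false)) (Cmul (A false false) (v false)))
                (Cmul (Cconj (v false)) (Cmul (A false true) (v true))))
          (Cadd (Cmul (Cconj (v true)) (Cmul (A true false) (v false)))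
                (Cmul (Cconj (v true)) (Cmul (A true true) (v true))))).
Definition qubit_state (rho : Mat2) : Prop :=
  hermitian rho /\ psd rho /\ Mtr rho = C1.

Definition sgn (a : bool) : R := if a then -1 else 1.

Definition proj (O : Mat2) (a : bool) : Mat2 :=
  Mscale (1/2) (Madd Mid (Mscale (sgn a) O)).

Definition Alice_obs (x : bool) : Mat2 := if x then sigma_y else sigma_x.
Definition MA (a x : bool) : Mat2 := proj (Alice_obs x) a.

(* Born probability Tr(M rho) (real for Hermitian M, rho) *)
Definition born (M rho : Mat2) : R := re (Mtr (Mmul M rho)).

Definition P_SvF (V : R) (a b c x y z : bool) : R :=
  (2 + sgn (xorb (xorb (xorb a b) c)
                 (xorb (xorb (andb x y) (andb y z)) (andb x z))) * sqrt 2 * V) / 16.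

Fixpoint fsum (n : nat) (f : nat -> R) : R :=
  match n with
  | O => 0
  | S k => fsum k f + f k
  end.

Definition cond_distr (Pr : bool -> bool -> R) : Prop :=
  forall y, (forall b, 0 <= Pr b y) /\ Pr false y + Pr true y = 1.

(* 2SDI fully LHS-LHV model (Alice trusted with measurements MA,
   Bob and Charlie black boxes), with a finite hidden variable lambda < n *)
Definition fully_LHS_LHV_2SDI (P : bool -> bool -> bool -> bool -> bool -> bool -> R)
  : Prop :=
  exists (n : nat) (q : nat -> R) (rhoA : nat -> Mat2)
         (PB PC : nat -> bool -> bool -> R),
    (forall l, (l < n)%nat -> 0 <= q l) /\
    fsum n q = 1 /\
    (forall l, (l < n)%nat -> qubit_state (rhoA l)) /\
    (forall l, (l < n)%nat -> cond_distr (PB l)) /\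
    (forall l, (l < n)%nat -> cond_distr (PC l)) /\
    (forall a b c x y z,
        P a b c x y z =
        fsum n (fun l => q l * born (MA a x) (rhoA l) * PB l b y * PC l c z)).

(* For a product distribution p_A(a|x) p_B(b|y) p_C(c|z) the Svetlichny
   expression S = sum_xyz (-1)^{xy+yz+xz} E_xyz factors through the one-party
   correlators, S = sum_xyz (-1)^{xy+yz+xz} alpha_x beta_y gamma_z.  Alice's
   correlators alpha_x = <A_x> lie in the Bloch disc alpha_0^2 + alpha_1^2 <= 1,
   while beta, gamma lie in [-1, 1]; by Cauchy-Schwarz, S <= 2 sqrt 2 for every
   hidden variable, hence for every 2SDI fully LHS-LHV model.  The Svetlichny family reaches S = 4 sqrt 2 V,
   which exceeds 2 sqrt 2 exactly when V > 1/2. *)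
From Stdlib Require Import Reals Lra Psatz.
Open Scope R_scope.

Definition bsum (f : bool -> R) : R := f false + f true.

Lemma fsum_le n (f g : nat -> R) :
  (forall l, (l < n)%nat -> f l <= g l) -> fsum n f <= fsum n g.
Proof.
  induction n as [|n IH]; simpl; intros Hfg; [lra|].
  assert (fsum n f <= fsum n g) by (apply IH; intros; apply Hfg; lia).
  assert (f n <= g n) by (apply Hfg; lia).
  lra.
Qed.

Lemma fsum_mulr n (f : nat -> R) c : fsum n (fun l => f l * c) = fsum n f * c.
Proof. induction n as [|n IH]; simpl; [|rewrite IH]; ring. Qed.

Definition corr (p : bool -> bool -> R) (x : bool) : R :=
  bsum (fun a => sgn a * p a x).

Lemma corr_born_proj (O : bool -> Mat2) rho x :
  corr (fun a x => born (proj (O x) a) rho) x = born (O x) rho.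
Proof.
  unfold corr, bsum, born, proj, Mtr, Mmul, Mscale, Madd, Mid, sgn,
    Cadd, Cmul, Cscale, C1, C0.
  simpl; field.
Qed.

Lemma corr_sqr_le1 (p : bool -> bool -> R) x : cond_distr p -> corr p x ^ 2 <= 1.
Proof.
  intros Hp; destruct (Hp x) as [Hpos Hsum].
  specialize (Hpos false) as H0; specialize (Hpos true) as H1.
  unfold corr, bsum, sgn; nra.
Qed.

Lemma born_sigma_x rho : hermitian rho -> born sigma_x rho = 2 * re (rho false true).
Proof.
  intros Hh; pose proof (f_equal re (Hh true false)) as Hre.
  unfold born, Mtr, Mmul, sigma_x in *; simpl in *; lra.
Qed.

Lemma born_sigma_y rho : hermitian rho -> born sigma_y rho = - 2 * im (rho false true).
Proof.
  intros Hh; pose proof (f_equal im (Hh true false)) as Him.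
  unfold born, Mtr, Mmul, sigma_y in *; simpl in *; lra.
Qed.

(* Positivity on the vectors (rho11, -rho10) and (-rho01, rho00) gives
   rho11 det rho >= 0 and rho00 det rho >= 0; summing, det rho >= 0, so
   |rho01|^2 <= rho00 rho11 <= 1/4. *)
Lemma qubit_state_coherence_le rho : qubit_state rho ->
  re (rho false true) ^ 2 + im (rho false true) ^ 2 <= 1/4.
Proof.
  intros [Hh [Hpsd Htr]].
  pose proof (f_equal re (Hh true false)) as Hre10.
  pose proof (f_equal im (Hh true false)) as Him10.
  pose proof (f_equal im (Hh false false)) as Him00.
  pose proof (f_equal im (Hh true true)) as Him11.
  pose proof (f_equal re Htr) as Htr_re.
  pose proof (Hpsd (fun i => if i then mkC (- re (rho true false)) (- im (rho true false))
                            else mkC (re (rho true true)) 0)) as Hv1.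
  pose proof (Hpsd (fun i => if i then mkC (re (rho false false)) 0
                            else mkC (- re (rho false true)) (- im (rho false true)))) as Hv2.
  unfold Mtr, Cadd, Cmul, Cconj, C1 in *; simpl in *.
  destruct (rho false false) as [r00 i00], (rho true true) as [r11 i11],
    (rho false true) as [r01 i01], (rho true false) as [r10 i10]; simpl in *.
  assert (i00 = 0) by lra; assert (i11 = 0) by lra;
    assert (r11 = 1 - r00) by lra; subst.
  assert (Hdet : r01 ^ 2 + i01 ^ 2 <= r00 * (1 - r00)) by nra.
  pose proof (pow2_ge_0 (r00 - 1/2)).
  lra.
Qed.

Lemma bloch_xy_le1 rho : qubit_state rho ->
  born sigma_x rho ^ 2 + born sigma_y rho ^ 2 <= 1.
Proof.
  intros Hs; pose proof (qubit_state_coherence_le rho Hs) as Hcoh.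
  destruct Hs as [Hh _].
  rewrite (born_sigma_x rho Hh), (born_sigma_y rho Hh); nra.
Qed.

Definition svetlichny_sign (x y z : bool) : R :=
  sgn (xorb (xorb (andb x y) (andb y z)) (andb x z)).

Definition correlator3 (P : bool -> bool -> bool -> bool -> bool -> bool -> R)
  (x y z : bool) : R :=
  bsum (fun a => bsum (fun b => bsum (fun c => sgn (xorb (xorb a b) c) * P a b c x y z))).

Definition svetlichny (P : bool -> bool -> bool -> bool -> bool -> bool -> R) : R :=
  bsum (fun x => bsum (fun y => bsum (fun z => svetlichny_sign x y z * correlator3 P x y z))).

Definition svetlichny_form (alpha beta gamma : bool -> R) : R :=
  bsum (fun x => bsum (fun y => bsum (fun z =>
    svetlichny_sign x y z * alpha x * beta y * gamma z))).

Lemma svetlichny_fsum n F :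
  svetlichny (fun a b c x y z => fsum n (fun l => F l a b c x y z)) =
  fsum n (fun l => svetlichny (F l)).
Proof.
  induction n as [|n IH]; simpl; [|rewrite <- IH];
    unfold svetlichny, correlator3, bsum; ring.
Qed.

Lemma svetlichny_product q pA pB pC :
  svetlichny (fun a b c x y z => q * pA a x * pB b y * pC c z) =
  q * svetlichny_form (corr pA) (corr pB) (corr pC).
Proof.
  unfold svetlichny, svetlichny_form, correlator3, corr, svetlichny_sign, bsum, sgn.
  simpl; ring.
Qed.

(* Writing u + i w = (beta_0 + i beta_1)(gamma_0 + i gamma_1), the form is
   alpha_0 (u + w) + alpha_1 (u - w), and (u + w)^2 + (u - w)^2 = 2 |u + i w|^2 <= 8. *)
Lemma svetlichny_form_le alpha beta gamma :
  alpha false ^ 2 + alpha true ^ 2 <= 1 ->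
  (forall y, beta y ^ 2 <= 1) -> (forall z, gamma z ^ 2 <= 1) ->
  svetlichny_form alpha beta gamma <= 2 * sqrt 2.
Proof.
  intros Ha Hb Hc.
  pose proof (Hb false); pose proof (Hb true); pose proof (Hc false); pose proof (Hc true).
  set (u := beta false * gamma false - beta true * gamma true).
  set (w := beta false * gamma true + beta true * gamma false).
  assert (Hform : svetlichny_form alpha beta gamma =
                  alpha false * (u + w) + alpha true * (u - w)).
  { unfold svetlichny_form, svetlichny_sign, bsum, sgn, u, w; simpl; ring. }
  assert (Huw : u ^ 2 + w ^ 2 <= 4).
  { replace (u ^ 2 + w ^ 2) with
      ((beta false ^ 2 + beta true ^ 2) * (gamma false ^ 2 + gamma true ^ 2))
      by (unfold u, w; ring).
    pose proof (pow2_ge_0 (beta false)); pose proof (pow2_ge_0 (beta true)).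
    pose proof (pow2_ge_0 (gamma false)); pose proof (pow2_ge_0 (gamma true)).
    nra. }
  assert (Hcs : (alpha false * (u + w) + alpha true * (u - w)) ^ 2 <= 8).
  { assert (Hlag : (alpha false * (u + w) + alpha true * (u - w)) ^ 2
                   + (alpha false * (u - w) - alpha true * (u + w)) ^ 2
                   = (alpha false ^ 2 + alpha true ^ 2) * (2 * (u ^ 2 + w ^ 2)))
      by ring.
    pose proof (pow2_ge_0 (alpha false * (u - w) - alpha true * (u + w))).
    pose proof (pow2_ge_0 u); pose proof (pow2_ge_0 w).
    nra. }
  assert (Hsqrt2 : sqrt 2 * sqrt 2 = 2) by (apply sqrt_sqrt; lra).
  pose proof (sqrt_pos 2).
  rewrite Hform; nra.
Qed.

Lemma svetlichny_fully_LHS_LHV_le P : fully_LHS_LHV_2SDI P -> svetlichny P <= 2 * sqrt 2.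
Proof.
  intros [n [q [rhoA [PB [PC [Hq [Hq1 [Hrho [HB [HC HP]]]]]]]]]].
  replace (svetlichny P) with
    (svetlichny (fun a b c x y z =>
       fsum n (fun l => q l * born (MA a x) (rhoA l) * PB l b y * PC l c z)))
    by (unfold svetlichny, correlator3, bsum; rewrite !HP; reflexivity).
  rewrite svetlichny_fsum, <- (Rmult_1_l (2 * sqrt 2)), <- Hq1, <- fsum_mulr.
  apply fsum_le; intros l Hl.
  rewrite (svetlichny_product (q l) (fun a x => born (MA a x) (rhoA l))).
  apply Rmult_le_compat_l; [now apply Hq|].
  apply svetlichny_form_le.
  - unfold MA; rewrite !(corr_born_proj Alice_obs); simpl.
    now apply bloch_xy_le1, Hrho.
  - intros y; now apply corr_sqr_le1, HB.
  - intros z; now apply corr_sqr_le1, HC.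
Qed.

Lemma svetlichny_SvF V : svetlichny (P_SvF V) = 4 * sqrt 2 * V.
Proof. unfold svetlichny, correlator3, svetlichny_sign, bsum, P_SvF, sgn; simpl; field. Qed.

Theorem proposition4 (V : R) (hV0 : 1/2 < V) (hV1 : V <= 1) :
  ~ fully_LHS_LHV_2SDI (P_SvF V).
Proof.
  intros Hmodel.
  pose proof (svetlichny_fully_LHS_LHV_le _ Hmodel) as Hle.
  rewrite svetlichny_SvF in Hle.
  assert (0 < sqrt 2) by (apply sqrt_lt_R0; lra).
  nra.
Qed.
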